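(* Let $G$ be a group with Property RD with respect to a length function $l$ such that no conjugacy class $C(g)$ with $g\ne e$ grows polynomially (for each such $g$ and every polynomial $P$ there are infinitely many $m$ with $|\{h\in C(g):l(h)=m\}|>P(m)$). Then every bounded trace on $C^*_{\mathrm{red}}G$ is a scalar multiple of the canonical trace $\sum c_g g\mapsto c_e$.
   Context: A length function on $G$ is $l:G\to\mathbb{Z}_{\ge0}$ with $l(fg)\le l(f)+l(g)$, $l(g^{-1})=l(g)$, $l(e)=0$, and $l^{-1}(S)$ finite for finite $S$. $\|\sum c_g g\|_{H^s}^2=\sum|c_g|^2(1+l(g))^{2s}$. $G$ has Property RD with respect to $l$ if there are constants $C,s$ with $\|x\|_{C^*_{\mathrm{red}}G}\le C\|x\|_{H^s}$ for all $x\in\mathbb{C}G$. $C(g)$ is the conjugacy class of $g$. A trace is a bounded linear functional $\tau$ with $\tau(ab)=\tau(ba)$. *)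

From Stdlib Require Import Reals Lra List ClassicalEpsilon.
Import ListNotations.
Open Scope R_scope.

Record Cplx := mkC { re : R; im : R }.
Definition C0 : Cplx := mkC 0 0.
Definition Cadd (a b : Cplx) : Cplx := mkC (re a + re b) (im a + im b).
Definition Cmul (a b : Cplx) : Cplx :=
  mkC (re a * re b - im a * im b) (re a * im b + im a * re b).
Definition Cnorm2 (a : Cplx) : R := re a * re a + im a * im a.
Definition Cabs (a : Cplx) : R := sqrt (Cnorm2 a).

Record Group := {
  gcar :> Type;
  gmul : gcar -> gcar -> gcar;
  ginv : gcar -> gcar;
  gone : gcar;
  gmul_assoc : forall a b c, gmul a (gmul b c) = gmul (gmul a b) c;
  gmul_1l : forall a, gmul gone a = a;
  gmul_1r : forall a, gmul a gone = a;
  gmul_Vl : forall a, gmul (ginv a) a = gone;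
  gmul_Vr : forall a, gmul a (ginv a) = gone
}.

Section G.
Variable G : Group.

Definition geq_dec (a b : G) : {a = b} + {a <> b} :=
  excluded_middle_informative (a = b).

Definition is_length_function (l : G -> nat) : Prop :=
  (forall f g, (l (gmul G f g) <= l f + l g)%nat) /\
  (forall g, l (ginv G g) = l g) /\
  l (gone G) = 0%nat /\
  (forall S : list nat, exists L : list G, forall g, In (l g) S -> In g L).

(* Elements of CG are functions x : G -> C with finite support; a list L
   "supports" x if x vanishes off L. *)
Definition supported (x : G -> Cplx) (L : list G) : Prop :=
  forall g, ~ In g L -> x g = C0.

Definition lsumC (L : list G) (F : G -> Cplx) : Cplx :=
  fold_right (fun g acc => Cadd (F g) acc) C0 (nodup geq_dec L).
Definition lsumR (L : list G) (F : G -> R) : R :=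
  fold_right (fun g acc => F g + acc) 0 (nodup geq_dec L).

(* convolution (product in CG) x * y, given a list Lx supporting x *)
Definition conv (Lx : list G) (x y : G -> Cplx) : G -> Cplx :=
  fun h => lsumC Lx (fun g => Cmul (x g) (y (gmul G (ginv G g) h))).

Definition prodlist (Lx Ly : list G) : list G :=
  flat_map (fun a => map (fun b => gmul G a b) Ly) Lx.

Definition l2sq (L : list G) (f : G -> Cplx) : R := lsumR L (fun g => Cnorm2 (f g)).

(* ||x||_{C*_red G} <= M : the operator of left convolution by x on l^2(G)
   has norm <= M (tested on the dense subspace of finitely supported vectors) *)
Definition red_norm_le (x : G -> Cplx) (Lx : list G) (M : R) : Prop :=
  forall (xi : G -> Cplx) (Lxi : list G), supported xi Lxi ->
    sqrt (l2sq (prodlist Lx Lxi) (conv Lx x xi)) <= M * sqrt (l2sq Lxi xi).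

Definition Hs_norm (l : G -> nat) (s : R) (L : list G) (x : G -> Cplx) : R :=
  sqrt (lsumR L (fun g => Cnorm2 (x g) * Rpower (1 + INR (l g)) (2 * s))).

Definition PropertyRD (l : G -> nat) : Prop :=
  exists Cst s : R, forall (x : G -> Cplx) (Lx : list G), supported x Lx ->
    red_norm_le x Lx (Cst * Hs_norm l s Lx x).

Definition in_conj_class (g h : G) : Prop :=
  exists k : G, h = gmul G (gmul G k g) (ginv G k).

(* real polynomial with coefficient list [a0; a1; ...] *)
Fixpoint peval (P : list R) (t : R) : R :=
  match P with [] => 0 | a :: P' => a + t * peval P' t end.

Definition sphere_count_gt (l : G -> nat) (g : G) (m : nat) (c : R) : Prop :=
  exists L : list G, NoDup L /\
    (forall h, In h L -> in_conj_class g h /\ l h = m) /\ INR (length L) > c.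

Definition not_poly_growth (l : G -> nat) (g : G) : Prop :=
  forall P : list R, forall N : nat, exists m : nat, (N <= m)%nat /\
    sphere_count_gt l g m (peval P (INR m)).

(* bounded traces on C*_red G, described by their restriction to the dense
   subalgebra CG: linear, tracial, bounded for the reduced norm *)
Definition bounded_trace (tau : (G -> Cplx) -> Cplx) : Prop :=
  (forall x y Lx Ly, supported x Lx -> supported y Ly ->
     tau (fun g => Cadd (x g) (y g)) = Cadd (tau x) (tau y)) /\
  (forall (a : Cplx) x Lx, supported x Lx ->
     tau (fun g => Cmul a (x g)) = Cmul a (tau x)) /\
  (forall x y Lx Ly, supported x Lx -> supported y Ly ->
     tau (conv Lx x y) = tau (conv Ly y x)) /\
  (exists K : R, forall x Lx M, supported x Lx -> red_norm_le x Lx M ->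
     Cabs (tau x) <= K * M).

End G.

(* A trace is constant on conjugacy classes, so on the indicator of N elements
   of C(g) of length m it takes the value N tau(g).  The bounded trace is
   controlled by the reduced norm, which Property RD controls by the H^s norm
   sqrt(N (1+m)^(2s)).  Hence N^2 |tau(g)|^2 <= A N (1+m)^(2s), i.e. if
   tau(g) <> 0 then the spheres of C(g) grow at most polynomially.  So tau
   vanishes on every g <> e, and by linearity tau x = tau(e) x(e). *)

From Stdlib Require Import Reals List.
From Stdlib Require Import Lra FunctionalExtensionality.
Import ListNotations.
Open Scope R_scope.

Lemma Cext (a b : Cplx) : re a = re b -> im a = im b -> a = b.
Proof. now destruct a, b; simpl; intros -> ->. Qed.

Definition C1 : Cplx := mkC 1 0.
Definition Creal (r : R) : Cplx := mkC r 0.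

Lemma Cmul0l a : Cmul C0 a = C0. Proof. apply Cext; simpl; ring. Qed.
Lemma Cmul0r a : Cmul a C0 = C0. Proof. apply Cext; simpl; ring. Qed.
Lemma Cmul1l a : Cmul C1 a = a. Proof. apply Cext; simpl; ring. Qed.
Lemma Cmul1r a : Cmul a C1 = a. Proof. apply Cext; simpl; ring. Qed.
Lemma Cadd0l a : Cadd C0 a = a. Proof. apply Cext; simpl; ring. Qed.
Lemma Cadd0r a : Cadd a C0 = a. Proof. apply Cext; simpl; ring. Qed.
Lemma CmulC a b : Cmul a b = Cmul b a. Proof. apply Cext; simpl; ring. Qed.

Lemma Cnorm2_ge0 a : 0 <= Cnorm2 a.
Proof. unfold Cnorm2; nra. Qed.

Lemma Cnorm2_eq0 a : Cnorm2 a = 0 -> a = C0.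
Proof. unfold Cnorm2; intro H; apply Cext; simpl; nra. Qed.

Lemma Cnorm2_mul_real r a : Cnorm2 (Cmul (Creal r) a) = r * r * Cnorm2 a.
Proof. unfold Cnorm2; simpl; ring. Qed.

Lemma Creal_addn1 n a :
  Cmul (Creal (INR (S n))) a = Cadd a (Cmul (Creal (INR n)) a).
Proof. rewrite S_INR; apply Cext; simpl; ring. Qed.

Lemma sqrt_le_sqr X B : 0 <= X -> sqrt X <= B -> X <= B * B.
Proof.
intros HX HB; rewrite <- (sqrt_sqrt X HX).
pose proof (sqrt_pos X); apply Rmult_le_compat; lra.
Qed.

Lemma fold_right_add_const (A : Type) (f : A -> R) c L :
  (forall a, In a L -> f a = c) ->
  fold_right (fun a acc => f a + acc) 0 L = INR (length L) * c.
Proof.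
induction L as [|a L IH]; intro Hf; cbn [fold_right length]; [simpl; ring|].
rewrite IH by (intros; apply Hf; simpl; auto).
rewrite Hf by (simpl; auto); rewrite S_INR; ring.
Qed.

Lemma Rpower_le_pow x r d : 1 <= x -> r <= INR d -> Rpower x r <= x ^ d.
Proof. intros Hx Hr; rewrite <- Rpower_pow by lra; apply Rle_Rpower; lra. Qed.

Lemma ginv_mulK_eq (G : Group) (a h b : G) :
  gmul G (ginv G a) h = b <-> h = gmul G a b.
Proof.
split; intro H; subst; rewrite gmul_assoc.
- now rewrite gmul_Vr, gmul_1l.
- now rewrite gmul_Vl, gmul_1l.
Qed.

Fixpoint padd (P Q : list R) : list R :=
  match P, Q with
  | [], _ => Q
  | _, [] => P
  | a :: P', b :: Q' => (a + b) :: padd P' Q'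
  end.

Fixpoint poly_1addX_pow (d : nat) : list R :=
  match d with O => [1] | S d' => padd (poly_1addX_pow d') (0 :: poly_1addX_pow d') end.

Definition pscale (c : R) (P : list R) : list R := map (Rmult c) P.

Lemma peval_padd P Q t : peval (padd P Q) t = peval P t + peval Q t.
Proof. revert Q; induction P; destruct Q; simpl; try ring; rewrite IHP; ring. Qed.

Lemma peval_poly_1addX_pow d t : peval (poly_1addX_pow d) t = (1 + t) ^ d.
Proof. induction d; simpl; [ring|]; rewrite peval_padd; simpl; rewrite IHd; ring. Qed.

Lemma peval_pscale c P t : peval (pscale c P) t = c * peval P t.
Proof. induction P; simpl; [ring|]; rewrite IHP; ring. Qed.

Lemma not_poly_growth_sphere_gt (G : Group) (l : G -> nat) (g : G) c d :
  not_poly_growth G l g -> exists m L, NoDup L /\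
    (forall h, In h L -> in_conj_class G g h /\ l h = m) /\
    INR (length L) > c * (1 + INR m) ^ d.
Proof.
intro Hg; destruct (Hg (pscale c (poly_1addX_pow d)) 0%nat) as [m [_ [L HL]]].
rewrite peval_pscale, peval_poly_1addX_pow in HL; eauto.
Qed.

Section BoundedTrace.

Variable G : Group.
Variable tau : (G -> Cplx) -> Cplx.
Hypothesis htau : bounded_trace G tau.

Definition delta (k : G) : G -> Cplx :=
  fun h => if geq_dec G h k then C1 else C0.

Definition ind (L : list G) : G -> Cplx :=
  fun h => if in_dec (geq_dec G) h L then C1 else C0.

Lemma supported_delta k : supported G (delta k) [k].
Proof.
intros g Hg; unfold delta; destruct (geq_dec G g k); [subst; simpl in Hg|]; tauto.
Qed.

Lemma supported_ind L : supported G (ind L) L.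
Proof. intros g Hg; unfold ind; destruct (in_dec (geq_dec G) g L); tauto. Qed.

Lemma ind_cons h L :
  ~ In h L -> ind (h :: L) = fun x => Cadd (delta h x) (ind L x).
Proof.
intro Hh; apply functional_extensionality; intro x; unfold ind, delta.
destruct (in_dec (geq_dec G) x (h :: L)) as [i|i];
destruct (in_dec (geq_dec G) x L) as [j|j];
destruct (geq_dec G x h) as [e|e]; subst; apply Cext; simpl; try ring;
simpl in i; intuition congruence.
Qed.

Lemma lsumC1 (k : G) F : lsumC G [k] F = F k.
Proof.
unfold lsumC; rewrite nodup_fixed_point by (repeat constructor; simpl; tauto).
apply Cadd0r.
Qed.

Lemma conv_delta_l k y : conv G [k] (delta k) y = fun h => y (gmul G (ginv G k) h).
Proof.
apply functional_extensionality; intro h; unfold conv; rewrite lsumC1; unfold delta.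
destruct (geq_dec G k k); [apply Cmul1l | congruence].
Qed.

Lemma delta_translate a b :
  (fun h => delta b (gmul G (ginv G a) h)) = delta (gmul G a b).
Proof.
apply functional_extensionality; intro h; unfold delta.
destruct (geq_dec G (gmul G (ginv G a) h) b) as [e|n];
destruct (geq_dec G h (gmul G a b)) as [e'|n']; auto; exfalso.
- exact (n' (proj1 (ginv_mulK_eq G a h b) e)).
- exact (n (proj2 (ginv_mulK_eq G a h b) e')).
Qed.

Lemma tau_C0 : tau (fun _ => C0) = C0.
Proof.
destruct htau as [_ [Hscal _]].
pose proof (Hscal C0 (fun _ => C0) [] (fun g _ => eq_refl)) as E.
now rewrite !Cmul0l in E.
Qed.

(* tau(k g k^-1) = tau(k * (g k^-1)) = tau((g k^-1) * k) = tau(g). *)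
Lemma tau_delta_conj g k : tau (delta (gmul G (gmul G k g) (ginv G k))) = tau (delta g).
Proof.
destruct htau as [_ [_ [Htr _]]].
pose proof (Htr (delta k) (delta (gmul G g (ginv G k))) _ _
  (supported_delta k) (supported_delta _)) as E.
rewrite !conv_delta_l, !delta_translate in E.
rewrite <- (gmul_assoc G g), gmul_Vl, gmul_1r, gmul_assoc in E.
exact E.
Qed.

Lemma tau_ind_conj_class g L : NoDup L -> (forall h, In h L -> in_conj_class G g h) ->
  tau (ind L) = Cmul (Creal (INR (length L))) (tau (delta g)).
Proof.
induction L as [|h L IH]; intros Hnd Hc.
- replace (ind []) with (fun _ : G => C0) by (apply functional_extensionality; auto).
  rewrite tau_C0; apply Cext; simpl; ring.
- inversion Hnd as [|? ? HhL HndL]; subst.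
  destruct htau as [Hadd _].
  rewrite ind_cons, (Hadd _ _ _ _ (supported_delta h) (supported_ind L)) by exact HhL.
  rewrite IH by (auto; intros; apply Hc; simpl; auto).
  destruct (Hc h (or_introl eq_refl)) as [k ->].
  rewrite tau_delta_conj; cbn [length]; now rewrite Creal_addn1.
Qed.

Lemma tau_of_delta_vanishing
  (H0 : forall h, h <> gone G -> tau (delta h) = C0) :
  forall Lx x, supported G x Lx -> tau x = Cmul (tau (delta (gone G))) (x (gone G)).
Proof.
destruct htau as [Hadd [Hscal _]].
induction Lx as [|h L IH]; intros x Hx.
- replace x with (fun _ : G => C0)
    by (apply functional_extensionality; intro g; symmetry; apply Hx; auto).
  now rewrite tau_C0, Cmul0r.
- set (x' := fun g => if geq_dec G g h then C0 else x g).
  assert (Hx' : supported G x' L).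
  { intros g Hg; unfold x'; destruct (geq_dec G g h); auto.
    apply Hx; simpl; intros [e|e]; [congruence | tauto]. }
  assert (Hxh : supported G (fun g => Cmul (x h) (delta h g)) [h]).
  { intros g Hg; rewrite (supported_delta h g Hg); apply Cmul0r. }
  assert (Ex : x = fun g => Cadd (Cmul (x h) (delta h g)) (x' g)).
  { apply functional_extensionality; intro g; unfold x', delta.
    destruct (geq_dec G g h) as [->|].
    - now rewrite Cmul1r, Cadd0r.
    - now rewrite Cmul0r, Cadd0l. }
  rewrite Ex at 1.
  rewrite (Hadd _ _ _ _ Hxh Hx'), (Hscal _ _ _ (supported_delta h)), (IH x' Hx').
  unfold x'; destruct (geq_dec G (gone G) h) as [<-|n].
  + now rewrite Cmul0r, Cadd0r, CmulC.
  + now rewrite H0, Cmul0r, Cadd0l by auto.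
Qed.

Variable l : G -> nat.

Lemma Hs_norm_ind_sphere s m L : NoDup L -> (forall h, In h L -> l h = m) ->
  Hs_norm G l s L (ind L) = sqrt (INR (length L) * Rpower (1 + INR m) (2 * s)).
Proof.
intros Hnd Hm; unfold Hs_norm, lsumR; rewrite (nodup_fixed_point _ Hnd); f_equal.
apply fold_right_add_const; intros h Hh; unfold ind.
destruct (in_dec (geq_dec G) h L); [|tauto].
rewrite Hm by exact Hh; unfold Cnorm2; simpl; ring.
Qed.

Lemma trace_conj_sphere_bound (hRD : PropertyRD G l) g : exists A s,
  forall m L, NoDup L -> (forall h, In h L -> in_conj_class G g h /\ l h = m) ->
  INR (length L) * Cnorm2 (tau (delta g)) <= A * Rpower (1 + INR m) (2 * s).
Proof.
destruct hRD as [Cst [s HRD]]; destruct htau as [_ [_ [_ [K HK]]]].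
exists ((K * Cst) * (K * Cst)), s; intros m L Hnd HL.
set (N := INR (length L)); set (Rp := Rpower (1 + INR m) (2 * s)).
assert (HN : 0 <= N) by apply pos_INR.
assert (HRp : 0 < Rp) by apply exp_pos.
pose proof (HK _ _ _ (supported_ind L) (HRD _ _ (supported_ind L))) as Hb.
rewrite (Hs_norm_ind_sphere s m L Hnd (fun h Hh => proj2 (HL h Hh))) in Hb.
rewrite (tau_ind_conj_class g L Hnd (fun h Hh => proj1 (HL h Hh))) in Hb.
apply sqrt_le_sqr in Hb; [|apply Cnorm2_ge0].
rewrite Cnorm2_mul_real in Hb; fold N Rp in Hb.
replace (K * (Cst * sqrt (N * Rp)) * (K * (Cst * sqrt (N * Rp))))
  with (K * Cst * (K * Cst) * (sqrt (N * Rp) * sqrt (N * Rp))) in Hb by ring.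
rewrite sqrt_sqrt in Hb by nra.
pose proof (Cnorm2_ge0 (tau (delta g))).
assert (HA : 0 <= K * Cst * (K * Cst) * Rp)
  by (apply Rmult_le_pos; [apply Rle_0_sqr | lra]).
destruct (Req_dec N 0) as [->|HN0]; [lra|].
apply Rmult_le_reg_l with N; [lra | nra].
Qed.

Lemma tau_delta_eq0 (hRD : PropertyRD G l) g :
  not_poly_growth G l g -> tau (delta g) = C0.
Proof.
intro Hg; apply Cnorm2_eq0.
destruct (Cnorm2_ge0 (tau (delta g))) as [Ht|]; [exfalso | auto].
set (t := Cnorm2 (tau (delta g))) in *.
destruct (trace_conj_sphere_bound hRD g) as [A [s HA]].
destruct (INR_unbounded (2 * s)) as [d Hd].
destruct (not_poly_growth_sphere_gt G l g (Rabs A / t) d Hg) as [m [L [Hnd [HL HN]]]].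
specialize (HA m L Hnd HL); fold t in HA.
set (N := INR (length L)) in *; set (X := (1 + INR m) ^ d) in *.
set (Rp := Rpower (1 + INR m) (2 * s)) in *.
assert (HRp : 0 < Rp) by apply exp_pos.
assert (HRpX : Rp <= X) by (pose proof (pos_INR m); apply Rpower_le_pow; lra).
assert (HNt : Rabs A * X < N * t).
{ replace (Rabs A * X) with (Rabs A / t * X * t) by (field; lra).
  apply Rmult_lt_compat_r; lra. }
assert (HARp : A * Rp <= Rabs A * X).
{ apply Rle_trans with (Rabs A * Rp).
  - apply Rmult_le_compat_r; [lra | apply Rle_abs].
  - apply Rmult_le_compat_l; [apply Rabs_pos | exact HRpX]. }
lra.
Qed.

End BoundedTrace.

Theorem mainTheorem8 (G : Group) (l : G -> nat)
  (hl : is_length_function G l)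
  (hRD : PropertyRD G l)
  (hgrowth : forall g : G, g <> gone G -> not_poly_growth G l g)
  (tau : (G -> Cplx) -> Cplx)
  (htau : bounded_trace G tau) :
  exists lam : Cplx, forall (x : G -> Cplx) (Lx : list G),
    supported G x Lx -> tau x = Cmul lam (x (gone G)).
Proof.
exists (tau (delta G (gone G))); intros x Lx Hx.
apply (tau_of_delta_vanishing G tau htau) with Lx; auto.
intros g Hg; apply (tau_delta_eq0 G tau htau l hRD), hgrowth, Hg.
Qed.
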